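(* Let $k\ge2$ be an integer, $\lambda=e^{2\pi i/k}$, and $a,b,c,d\in\mathbb{C}$. Suppose that for every $j\in\mathbb{N}$, both pairs $(x,y)=(a+\lambda^j d,\ c+\lambda^j b)$ and $(x,y)=(a+\lambda^j c,\ d+\lambda^j b)$ satisfy $x^k=y^k$ (these are the unary functions obtained by attaching the unary function $(1,\lambda^j)$ to either variable of $Q=\begin{pmatrix}a&c\\d&b\end{pmatrix}$). Then: If $k\ge3$, one of the following holds: (1) $a=b=c=d=0$; (2) $a=b=0$ and $c^k=d^k$; (3) $c=d=0$ and $a^k=b^k$; (4) none of $a,b,c,d$ is zero, $ab=cd$, and the ratio of any two of $a,b,c,d$ is a $k$-th root of unity. If $k=2$, one of the following holds: (1) $a=b=c=d=0$; (2) $a=b=0$ and $c^2=d^2$; (3) $c=d=0$ and $a^2=b^2$; (4) none of $a,b,c,d$ is zero, $b=a$ and $d=c$; (5) none of $a,b,c,d$ is zero, $b=-a$ and $d=-c$. *)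

From mathcomp Require Import all_boot all_order all_algebra.
From mathcomp Require Import all_classical all_reals all_analysis.
From mathcomp Require Export complex.
Import Order.TTheory GRing.Theory Num.Theory.
Local Open Scope ring_scope.
Local Open Scope complex_scope.

Definition root_lambda (R : realType) (k : nat) : R[i] :=
  ((cos (2 * pi / k%:R)) +i* (sin (2 * pi / k%:R)))%C.

From mathcomp Require Import all_boot all_order all_algebra.
From mathcomp Require Import all_classical all_reals all_analysis.
From mathcomp Require Import complex.
From mathcomp Require Import ring lra.
Import Order.TTheory GRing.Theory Num.Theory.
Local Open Scope ring_scope.

(* As a polynomial in t, (x + t y)^k - (u + t v)^k has degree at most k and
   vanishes at the k distinct k-th roots of unity, so it is a multiple of t^k - 1:
   its middle binomial coefficients vanish and its extreme ones cancel.  For the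
   two attachments this gives a^(k-m) d^m = c^(k-m) b^m and a^(k-m) c^m = d^(k-m) b^m
   for 0 < m < k, plus a^k + d^k = c^k + b^k and a^k + c^k = d^k + b^k, whence
   a^k = b^k and c^k = d^k.  When no entry vanishes, comparing m = 1 with m = 2
   gives ab = cd and then a^k = c^k for k >= 3; for k = 2, a^2 = b^2 and ad = cb
   leave only b = a, d = c or b = -a, d = -c. *)

Lemma de_moivre (R : realType) (x : R) n :
  (cos x +i* sin x)%C ^+ n = (cos (x *+ n) +i* sin (x *+ n))%C.
Proof.
elim: n => [|n IHn]; first by rewrite expr0 mulr0n cos0 sin0.
rewrite exprS IHn mulrS cosD sinD.
by apply/eqP; rewrite eq_complex /=; apply/andP; split; apply/eqP; ring.
Qed.

Lemma cos_mulr2n_lt1 (R : realType) (y : R) : 0 < y < pi -> cos (y *+ 2) < 1.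
Proof.
move=> /sin_gt0_pi sin_gt0; rewrite cos_mulr2n cos2sin2.
have : 0 < sin y ^+ 2 by rewrite exprn_gt0.
lra.
Qed.

Lemma root_lambda_prim (R : realType) k :
  (0 < k)%N -> k.-primitive_root (root_lambda R k).
Proof.
move=> k_gt0; have kR : (k%:R : R) != 0 by rewrite pnatr_eq0 -lt0n.
have lambdaX n : root_lambda R k ^+ n =
    (cos ((pi * n%:R / k%:R) *+ 2) +i* sin ((pi * n%:R / k%:R) *+ 2))%C.
  by rewrite de_moivre; congr (cos _ +i* sin _)%C; rewrite -mulr_natr; field.
have [m prim_m m_dvd_k] : {m | m.-primitive_root (root_lambda R k) & (m %| k)%N}.
  apply: prim_order_exists => //.
  by rewrite lambdaX mulfK // mulr2n cos2pi sin2pi.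
have m_gt0 := prim_order_gt0 prim_m.
suff m_eq_k : m = k by move: prim_m; rewrite m_eq_k.
apply/eqP; rewrite eqn_leq dvdn_leq //=; apply: contraT; rewrite -ltnNge => lt_mk.
have := prim_expr_order prim_m; rewrite lambdaX => -[/eqP + _].
rewrite lt_eqF // cos_mulr2n_lt1 // divr_gt0 ?mulr_gt0 ?pi_gt0 ?ltr0n //=.
by rewrite ltr_pdivrMr ?ltr0n // ltr_pM2l ?pi_gt0 // ltr_nat.
Qed.

Lemma prim_roots_poly_eq (R : idomainType) n (z : R) (p : {poly R}) :
  n.-primitive_root z -> (size p <= n.+1)%N -> (forall i, root p (z ^+ i)) ->
  p = p`_n *: ('X^n - 1).
Proof.
move=> prim_z size_p root_p; have n_gt0 := prim_order_gt0 prim_z.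
apply/eqP; rewrite -subr_eq0; apply/eqP.
apply: (@roots_geq_poly_eq0 _ _ [seq z ^+ i | i <- iota 0 n]).
- apply/allP => _ /mapP[i _ ->]; rewrite rootE !hornerE -exprM mulnC exprM.
  by rewrite (prim_expr_order prim_z) expr1n subrr mulr0 subr0; exact: root_p.
- rewrite map_inj_in_uniq ?iota_uniq // => i j; rewrite !mem_iota /= !add0n.
  by move=> lt_in lt_jn /eqP; rewrite (eq_prim_root_expr prim_z) !modn_small // => /eqP.
rewrite size_map size_iota; apply/leq_sizeP => j.
rewrite leq_eqVlt => /orP[/eqP <-|lt_nj].
  by rewrite coefB coefZ coefB coefXn coefC eqxx gtn_eqF // subr0 mulr1 subrr.
rewrite coefB coefZ coefB coefXn coefC gtn_eqF // (gtn_eqF (leq_ltn_trans (leq0n _) lt_nj)).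
by rewrite subrr mulr0 subr0 nth_default // (leq_trans size_p).
Qed.

Definition binom_diff_poly {R : comNzRingType} (n : nat) (x y u v : R) : {poly R} :=
  \poly_(i < n.+1) ((x ^+ (n - i) * y ^+ i - u ^+ (n - i) * v ^+ i) *+ 'C(n, i)).

Lemma horner_binom_diff {R : comNzRingType} (n : nat) (x y u v t : R) :
  (binom_diff_poly n x y u v).[t] = (x + t * y) ^+ n - (u + t * v) ^+ n.
Proof.
rewrite horner_poly !exprDn -sumrB; apply: eq_bigr => i _.
by rewrite mulrnBl mulrBl !mulrnAl !exprMn; congr (_ *+ _ - _ *+ _); ring.
Qed.

Definition binom_terms_match {R : nzRingType} (n : nat) (x y u v : R) :=
  (forall m, (0 < m < n)%N -> x ^+ (n - m) * y ^+ m = u ^+ (n - m) * v ^+ m) /\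
  x ^+ n + y ^+ n = u ^+ n + v ^+ n.

Lemma binom_terms_match_prim_root {R : numDomainType} {n : nat} {z x y u v : R} :
  n.-primitive_root z -> (forall j, (x + z ^+ j * y) ^+ n = (u + z ^+ j * v) ^+ n) ->
  binom_terms_match n x y u v.
Proof.
move=> prim_z eq_pow; have n_gt0 := prim_order_gt0 prim_z.
set P := binom_diff_poly n x y u v.
have P_eq : P = P`_n *: ('X^n - 1).
  apply: prim_roots_poly_eq prim_z (size_poly _ _) _ => j.
  by rewrite rootE horner_binom_diff eq_pow subrr.
split=> [m /andP[m_gt0 lt_mn]|].
  have : P`_m = 0.
    by rewrite P_eq coefZ coefB coefXn coefC ltn_eqF // gtn_eqF // subrr mulr0.
  rewrite coef_poly ltnS ltnW // => /eqP.
  by rewrite mulrn_eq0 eqn0Ngt bin_gt0 (ltnW lt_mn) /= subr_eq0 => /eqP.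
have : P`_0 = - P`_n.
  by rewrite {1}P_eq coefZ coefB coefXn coefC ltn_eqF // mulr0n sub0r mulrN1.
rewrite !coef_poly ltnS leq0n leqnn subn0 subnn bin0 binn !expr0 !mulr1 !mul1r.
by move/eqP; rewrite -addr_eq0 addrACA -opprD subr_eq0 => /eqP.
Qed.

Section MatchedBinomialTerms.

Context {F : numFieldType} {k : nat} {a b c d : F}.
Hypothesis k_ge2 : (2 <= k)%N.
Hypothesis match_ad : binom_terms_match k a d c b.
Hypothesis match_ac : binom_terms_match k a c d b.

Let k_gt0 : (0 < k)%N. Proof. exact: ltnW. Qed.

Let k1 : (0 < 1 < k)%N. Proof. by []. Qed.

Let expr0k : 0 ^+ k = 0 :> F.
Proof. by rewrite expr0n gtn_eqF. Qed.

Let eq0_exprk {x y : F} : x ^+ k = y ^+ k -> (x == 0) = (y == 0).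
Proof. by move=> xy; rewrite -[LHS]andTb -k_gt0 -expf_eq0 xy expf_eq0 k_gt0. Qed.

Lemma exprk_cd : c ^+ k = d ^+ k.
Proof.
have : (c ^+ k - d ^+ k) *+ 2 = 0.
  transitivity (a ^+ k + c ^+ k - (d ^+ k + b ^+ k) - (a ^+ k + d ^+ k - (c ^+ k + b ^+ k))).
    by rewrite mulr2n; ring.
  by rewrite match_ad.2 match_ac.2 !subrr.
by move/eqP; rewrite mulrn_eq0 subr_eq0 => /eqP.
Qed.

Lemma exprk_ab : a ^+ k = b ^+ k.
Proof. by apply/eqP; rewrite -(inj_eq (addIr (d ^+ k))) match_ad.2 exprk_cd addrC. Qed.

Lemma eq0_ab : (a == 0) = (b == 0).
Proof.
apply/idP/idP => [/eqP a0|/eqP b0]; last by rewrite (eq0_exprk exprk_ab) b0.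
apply: contraT => nzb.
have [c0 d0] : c = 0 /\ d = 0.
  move: (match_ad.1 1 k1) (match_ac.1 1 k1).
  rewrite a0 expr0n subn_eq0 leqNgt k_ge2 !mul0r => /esym/eqP + /esym/eqP.
  rewrite !mulf_eq0 !expf_eq0 (negbTE nzb) subn_gt0 k_ge2 !orbF.
  by move=> /eqP c0 /eqP d0.
move: match_ad.2; rewrite a0 c0 d0 expr0k !add0r => /esym/eqP.
by rewrite expf_eq0 k_gt0 (negbTE nzb).
Qed.

Lemma matched_zero_cases :
  [\/ a = 0 /\ b = 0 /\ c ^+ k = d ^+ k,
      c = 0 /\ d = 0 /\ a ^+ k = b ^+ k |
      [/\ a != 0, b != 0, c != 0 & d != 0]].
Proof.
have eq0_cd := eq0_exprk exprk_cd.
have [a0|nza] := eqVneq a 0.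
  by apply: Or31; do !split=> //; [apply/eqP; rewrite -eq0_ab a0 | exact: exprk_cd].
have [c0|nzc] := eqVneq c 0.
  by apply: Or32; do !split=> //; [apply/eqP; rewrite -eq0_cd c0 | exact: exprk_ab].
by apply: Or33; split=> //; rewrite -?eq0_ab -?eq0_cd.
Qed.

Hypothesis nz : [/\ a != 0, b != 0, c != 0 & d != 0].

Lemma mul_ab_cd : (3 <= k)%N -> a * b = c * d.
Proof.
move=> k_ge3; have [nza nzb nzc nzd] := nz.
have k2 : (0 < 2 < k)%N by [].
set p := (k - 2)%N; have k_sub1 : (k - 1 = p.+1)%N by rewrite /p subnSK.
have := match_ad.1 1 k1; have := match_ad.1 2 k2; rewrite k_sub1 expr1 => h2 h1.
apply: (mulfI (_ : a ^+ p * c ^+ p * b * d != 0)); first by rewrite !mulf_neq0 ?expf_neq0.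
transitivity (a ^+ p.+1 * d * (c ^+ p * b ^+ 2)); first by rewrite exprS; ring.
by rewrite h1 -h2 exprS; ring.
Qed.

Lemma exprk_ac : (3 <= k)%N -> a ^+ k = c ^+ k.
Proof.
move=> k_ge3; have [_ _ _ nzd] := nz; apply: (mulIf nzd).
have := match_ad.1 1 k1; rewrite expr1 => h1.
transitivity (a * (a ^+ (k - 1) * d)); first by rewrite mulrA -exprS subn1 prednK.
by rewrite h1 mulrCA mul_ab_cd // mulrA -exprSr subn1 prednK.
Qed.

Lemma exprk_ratio_eq1 : (3 <= k)%N ->
  forall x y, x \in [:: a; b; c; d] -> y \in [:: a; b; c; d] -> (x / y) ^+ k = 1.
Proof.
move=> k_ge3; have [nza _ _ _] := nz.
have exprk_a x : x \in [:: a; b; c; d] -> x ^+ k = a ^+ k.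
  by rewrite !inE => /or4P[] /eqP ->; rewrite -?exprk_cd -?(exprk_ac k_ge3) -?exprk_ab.
move=> x y /exprk_a xk /exprk_a yk.
by rewrite exprMn exprVn xk yk divff // expf_neq0.
Qed.

Lemma signs_k2 : k = 2%N -> (b = a /\ d = c) \/ (b = - a /\ d = - c).
Proof.
move=> k_eq2; have [nza _ _ _] := nz.
have := match_ad.1 1 k1; have := exprk_ab; rewrite k_eq2 /= !expr1 => /eqP.
rewrite eqf_sqr => /orP[/eqP ab|/eqP ab] h1; [left|right].
  by split=> //; apply: (mulfI nza); rewrite h1 -ab mulrC.
have ba : b = - a by rewrite ab opprK.
by split=> //; apply: (mulfI nza); rewrite h1 ba mulrN mulrN mulrC.
Qed.

End MatchedBinomialTerms.

Theorem mainTheorem15 (R : realType) (k : nat) (a b c d : R[i]) :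
  (2 <= k)%N ->
  (forall j : nat,
      (a + (root_lambda R k) ^+ j * d) ^+ k = (c + (root_lambda R k) ^+ j * b) ^+ k /\
      (a + (root_lambda R k) ^+ j * c) ^+ k = (d + (root_lambda R k) ^+ j * b) ^+ k) ->
  ((3 <= k)%N ->
     [\/ a = 0 /\ b = 0 /\ c = 0 /\ d = 0,
         a = 0 /\ b = 0 /\ c ^+ k = d ^+ k,
         c = 0 /\ d = 0 /\ a ^+ k = b ^+ k |
         [/\ [/\ a != 0, b != 0, c != 0 & d != 0], a * b = c * d &
            forall x y : R[i], x \in [:: a; b; c; d] -> y \in [:: a; b; c; d] ->
              (x / y) ^+ k = 1]]) /\
  (k = 2%N ->
     (a = 0 /\ b = 0 /\ c = 0 /\ d = 0) \/
     (a = 0 /\ b = 0 /\ c ^+ 2 = d ^+ 2) \/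
     (c = 0 /\ d = 0 /\ a ^+ 2 = b ^+ 2) \/
     [/\ [/\ a != 0, b != 0, c != 0 & d != 0], b = a & d = c] \/
     [/\ [/\ a != 0, b != 0, c != 0 & d != 0], b = - a & d = - c]).
Proof.
move=> k_ge2 eq_pow.
have prim_lambda := root_lambda_prim R k (ltnW k_ge2).
have match_ad := binom_terms_match_prim_root prim_lambda (fun j => (eq_pow j).1).
have match_ac := binom_terms_match_prim_root prim_lambda (fun j => (eq_pow j).2).
case: (matched_zero_cases k_ge2 match_ad match_ac) => [abcd|cdab|nz].
- by split=> [_|k_eq2]; [apply: Or42 | right; left; rewrite -k_eq2].
- by split=> [_|k_eq2]; [apply: Or43 | right; right; left; rewrite -k_eq2].
split=> [k_ge3|k_eq2].
  apply: Or44; split=> //; first exact: (mul_ab_cd k_ge2 match_ad nz k_ge3).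
  exact: (exprk_ratio_eq1 k_ge2 match_ad match_ac nz k_ge3).
do 3!right.
by case: (signs_k2 k_ge2 match_ad match_ac nz k_eq2) => -[]; [left|right].
Qed.
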